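(* Let $\gamma\sim\mathcal{FB}(\bar\gamma;\kappa,\mu,m,\eta,\varrho)$ be a Fluctuating Beckmann random variable (as defined in the context). Then for every real $s\le 0$ its moment generating function $M_\gamma(s)=\mathbb{E}[e^{s\gamma}]$ is $$ M_\gamma(s)=\frac{1}{\left(1-\frac{2\eta\,\bar\gamma s}{\mu(1+\eta)(1+\kappa)}\right)^{\mu/2}\left(1-\frac{2\,\bar\gamma s}{\mu(1+\eta)(1+\kappa)}\right)^{\mu/2}} \left[1-\frac{1}{m}\left(\frac{\mu\kappa\frac{\varrho^2}{1+\varrho^2}(1+\eta)\bar\gamma s}{(1+\eta)(1+\kappa)\mu-2\eta\bar\gamma s}+\frac{\mu\kappa\frac{1}{1+\varrho^2}(1+\eta)\bar\gamma s}{(1+\eta)(1+\kappa)\mu-2\bar\gamma s}\right)\right]^{-m}. $$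
   Context: Fluctuating Beckmann (FB) model. Let $\mu$ be a positive integer, $\sigma_x,\sigma_y>0$, $m>0$, $\bar\gamma>0$, and let $p_1,\dots,p_\mu,q_1,\dots,q_\mu$ be real numbers with $p^2:=\sum_{i=1}^\mu p_i^2$, $q^2:=\sum_{i=1}^\mu q_i^2$, and $q^2>0$. Let $X_1,\dots,X_\mu,Y_1,\dots,Y_\mu,\xi$ be mutually independent random variables with $X_i\sim\mathcal N(0,\sigma_x^2)$, $Y_i\sim\mathcal N(0,\sigma_y^2)$, and $\xi\ge 0$ Nakagami-$m$ distributed with $\mathbb E[\xi^2]=1$, i.e. $\xi^2$ is Gamma distributed with shape $m$ and scale $1/m$ (density of $\xi$: $f_\xi(x)=\frac{2m^m}{\Gamma(m)}x^{2m-1}e^{-mx^2}$, $x>0$). Set $W=\sum_{i=1}^\mu\big[(X_i+p_i\xi)^2+(Y_i+q_i\xi)^2\big]$ and $\gamma=\bar\gamma\,W/\mathbb E[W]$ (so $\mathbb E[\gamma]=\bar\gamma$). The parameters are $\kappa=\frac{p^2+q^2}{\mu(\sigma_x^2+\sigma_y^2)}$, $\varrho^2=p^2/q^2$ (with $\varrho\ge0$), $\eta=\sigma_x^2/\sigma_y^2$. We then write $\gamma\sim\mathcal{FB}(\bar\gamma;\kappa,\mu,m,\eta,\varrho)$. *)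

From Stdlib Require Import Reals Lra.
Open Scope R_scope.

Fixpoint sumR (n : nat) (f : nat -> R) : R :=
  match n with
  | O => 0
  | S k => sumR k f + f k
  end.

Definition ImpInt_R (f : R -> R) (l : R) : Prop :=
  forall eps, 0 < eps -> exists A, 0 < A /\
    forall a b, A <= a -> A <= b ->
      exists pr : Riemann_integrable f (- a) b, Rabs (RiemannInt pr - l) < eps.

Definition ImpInt_pos (f : R -> R) (l : R) : Prop :=
  forall eps, 0 < eps -> exists d A, 0 < d /\ 0 < A /\
    forall a b, 0 < a -> a <= d -> A <= b ->
      exists pr : Riemann_integrable f a b, Rabs (RiemannInt pr - l) < eps.

Definition is_Gamma (m g : R) : Prop :=
  ImpInt_pos (fun t => Rpower t (m - 1) * exp (- t)) g.

Definition vcons (x : R) (v : nat -> R) : nat -> R :=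
  fun i => match i with O => x | S j => v j end.

(* Iterated improper integral over R^n of  (prod_i w i (v i)) * F v :
   int w0(x0) [ int w1(x1) [ ... F(x0,x1,...) ... ] dx1 ] dx0 = l. *)
Fixpoint IterInt (n : nat) (w : nat -> R -> R) (F : (nat -> R) -> R) (l : R)
  : Prop :=
  match n with
  | O => F (fun _ => 0) = l
  | S k => exists g : R -> R,
      (forall x, IterInt k (fun i => w (S i)) (fun v => F (vcons x v)) (g x))
      /\ ImpInt_R (fun x => w O x * g x) l
  end.

Definition gauss_pdf (sigma x : R) : R :=
  exp (- (x ^ 2) / (2 * sigma ^ 2)) / (sqrt (2 * PI) * sigma).

(* Nakagami-m density with E[xi^2] = 1; Gm = Gamma(m) *)
Definition nakagami_pdf (m Gm x : R) : R :=
  2 * Rpower m m / Gm * Rpower x (2 * m - 1) * exp (- m * x ^ 2).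

(* Coordinates of the Gaussian vector v : X_i = v i, Y_i = v (mu + i), i < mu. *)
Definition FB_weights (mu : nat) (sx sy : R) : nat -> R -> R :=
  fun i => if Nat.ltb i mu then gauss_pdf sx else gauss_pdf sy.

Definition FB_W (mu : nat) (p q : nat -> R) (xi : R) (v : nat -> R) : R :=
  sumR mu (fun i => (v i + p i * xi) ^ 2 + (v (mu + i)%nat + q i * xi) ^ 2).

(* E[h(xi, X, Y)] = l, with xi ~ Nakagami-m (Gm = Gamma(m)) independent of
   X_i ~ N(0,sx^2), Y_i ~ N(0,sy^2) (all independent). Written as the
   iterated integral against the product density. *)
Definition FB_Expect (mu : nat) (sx sy m Gm : R)
  (h : R -> (nat -> R) -> R) (l : R) : Prop :=
  exists g : R -> R,
    (forall x, 0 < x -> IterInt (2 * mu) (FB_weights mu sx sy) (h x) (g x))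
    /\ ImpInt_pos (fun x => nakagami_pdf m Gm x * g x) l.

Definition FB_p2 (mu : nat) (p : nat -> R) : R := sumR mu (fun i => p i ^ 2).
Definition FB_kappa (mu : nat) (sx sy : R) (p q : nat -> R) : R :=
  (FB_p2 mu p + FB_p2 mu q) / (INR mu * (sx ^ 2 + sy ^ 2)).
Definition FB_rho (mu : nat) (p q : nat -> R) : R :=
  sqrt (FB_p2 mu p / FB_p2 mu q).
Definition FB_eta (sx sy : R) : R := sx ^ 2 / sy ^ 2.

Definition FB_MGF (gbar kappa : R) (mu : nat) (m eta rho s : R) : R :=
  let mu' := INR mu in
  / (Rpower (1 - 2 * eta * gbar * s / (mu' * (1 + eta) * (1 + kappa))) (mu' / 2)
     * Rpower (1 - 2 * gbar * s / (mu' * (1 + eta) * (1 + kappa))) (mu' / 2))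
  * Rpower
      (1 - / m *
        (mu' * kappa * (rho ^ 2 / (1 + rho ^ 2)) * (1 + eta) * gbar * s
           / ((1 + eta) * (1 + kappa) * mu' - 2 * eta * gbar * s)
         + mu' * kappa * (1 / (1 + rho ^ 2)) * (1 + eta) * gbar * s
           / ((1 + eta) * (1 + kappa) * mu' - 2 * gbar * s)))
      (- m).

(* Conditionally on [xi], [W] is a sum of [2 mu] independent squared shifted Gaussians, so
   [E (exp (t W) | xi)] is a product of one-dimensional integrals
   [int exp (t (x + a)^2) phi_sigma(x) dx = (1 - 2 t sigma^2)^(-1/2) exp (t a^2 / (1 - 2 t sigma^2))],
   i.e. [(1 - 2 t sx^2)^(-mu/2) (1 - 2 t sy^2)^(-mu/2) exp (c xi^2)] with [c <= 0] linear in
   [p^2] and [q^2]. Averaging [exp (c xi^2)] against the Nakagami density is a Gamma integral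
   after the substitution [u = (m - c) xi^2], worth [(1 - c / m)^(-m)]; with [t = s gbar / E W]
   this is the closed form. [E W] is obtained in the same way from second moments.
   Every integral is computed from an explicit primitive: the Gaussian one because
   [(int_0^x exp (- u^2) du)^2 + int_0^1 exp (- x^2 (1 + u^2)) / (1 + u^2) du] is constant,
   the Gamma one as the limit of a monotone bounded primitive. *)

From Coquelicot Require Import Coquelicot.
From Stdlib Require Import Reals Lra Lia FunctionalExtensionality Classical_Prop.
Open Scope R_scope.

Notation line_int f l := (is_RInt_gen f (Rbar_locally m_infty) (Rbar_locally p_infty) l).

Notation halfline_int f l := (is_RInt_gen f (at_right 0) (Rbar_locally p_infty) l).

Lemma scal_R (k y : R) : scal k y = k * y.
Proof. reflexivity. Qed.

Lemma plus_R (x y : R) : plus x y = x + y.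
Proof. reflexivity. Qed.

Lemma minus_R (x y : R) : minus x y = x - y.
Proof. reflexivity. Qed.

Lemma continuous_of_ex_derive (f : R -> R) x : ex_derive f x -> continuous f x.
Proof. apply (ex_derive_continuous (K := R_AbsRing) (V := R_NormedModule)). Qed.

Lemma ex_RInt_of_continuous (f : R -> R) a b :
  (forall x, Rmin a b <= x <= Rmax a b -> continuous f x) -> ex_RInt f a b.
Proof. apply (ex_RInt_continuous (V := R_CompleteNormedModule)). Qed.

Lemma RiemannInt_of_is_RInt f a b l :
  is_RInt f a b l -> exists pr : Riemann_integrable f a b, RiemannInt pr = l.
Proof.
  intros Hf. exists (ex_RInt_Reals_0 _ _ _ (ex_intro _ l Hf)).
  rewrite <- RInt_Reals. exact (is_RInt_unique _ _ _ _ Hf).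
Qed.

Lemma ImpInt_R_of_line_int (f : R -> R) (l : R) : line_int f l -> ImpInt_R f l.
Proof.
  intros Hf eps Heps.
  destruct (Hf _ (locally_ball l (mkposreal eps Heps))) as [Qa Qb [Ma HMa] [Mb HMb] HQ].
  exists (Rmax 1 (Rmax (1 - Ma) (1 + Mb))).
  pose proof (Rmax_l 1 (Rmax (1 - Ma) (1 + Mb))).
  pose proof (Rmax_l (1 - Ma) (1 + Mb)). pose proof (Rmax_r (1 - Ma) (1 + Mb)).
  pose proof (Rmax_r 1 (Rmax (1 - Ma) (1 + Mb))).
  split; [lra|]. intros a b Ha Hb.
  destruct (HQ (- a) b) as (y & Hy & Hball); [apply HMa | apply HMb |]; try lra.
  simpl in Hy. destruct (RiemannInt_of_is_RInt _ _ _ _ Hy) as [pr Hpr].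
  exists pr. rewrite Hpr. exact Hball.
Qed.

Lemma ImpInt_pos_of_halfline_int (f : R -> R) (l : R) : halfline_int f l -> ImpInt_pos f l.
Proof.
  intros Hf eps Heps.
  destruct (Hf _ (locally_ball l (mkposreal eps Heps))) as [Qa Qb [d HQa] [Mb HMb] HQ].
  exists (d / 2), (Rmax 1 (1 + Mb)).
  pose proof (cond_pos d). pose proof (Rmax_l 1 (1 + Mb)). pose proof (Rmax_r 1 (1 + Mb)).
  repeat split; try lra. intros a b Ha Had Hb.
  destruct (HQ a b) as (y & Hy & Hball).
  { apply HQa; [|lra]. change (Rabs (a - 0) < d). apply Rabs_def1; lra. }
  { apply HMb; lra. }
  simpl in Hy. destruct (RiemannInt_of_is_RInt _ _ _ _ Hy) as [pr Hpr].
  exists pr. rewrite Hpr. exact Hball.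
Qed.

Lemma line_int_ext (f g : R -> R) (l l' : R) :
  (forall x, f x = g x) -> l = l' -> line_int f l -> line_int g l'.
Proof.
  intros Hfg <- Hf. apply (is_RInt_gen_ext f); [|exact Hf].
  apply filter_forall. intros ab x _. apply Hfg.
Qed.

Lemma halfline_int_ext (f g : R -> R) (l l' : R) :
  (forall x, 0 < x -> f x = g x) -> l = l' -> halfline_int f l -> halfline_int g l'.
Proof.
  intros Hfg <- Hf. apply (is_RInt_gen_ext f); [|exact Hf].
  exists (fun a => 0 < a) (fun b => 0 < b).
  - exists (mkposreal 1 Rlt_0_1). auto.
  - exists 0. auto.
  - intros a b Ha Hb x Hx. apply Hfg. simpl in Hx.
    assert (0 < Rmin a b) by (apply Rmin_glb_lt; auto). lra.
Qed.

Lemma is_RInt_gen_derive {Fa Fb : (R -> Prop) -> Prop} {FFa : Filter Fa} {FFb : Filter Fb}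
  (D : R -> Prop) (f P : R -> R) (la lb : R) : open D ->
  filter_prod Fa Fb
    (fun ab => forall x, Rmin (fst ab) (snd ab) <= x <= Rmax (fst ab) (snd ab) -> D x) ->
  (forall x, D x -> is_derive P x (f x)) -> (forall x, D x -> continuous f x) ->
  filterlim P Fa (locally la) -> filterlim P Fb (locally lb) ->
  is_RInt_gen f Fa Fb (lb - la).
Proof.
  intros HDo HD Hder Hcont Ha Hb.
  apply (is_RInt_gen_ext (Derive P)).
  - refine (filter_imp _ _ _ HD). intros [a b] H x Hx.
    apply is_derive_unique, Hder, H. simpl in *; lra.
  - apply is_RInt_gen_Derive; auto.
    + refine (filter_imp _ _ _ HD). intros [a b] H x Hx. eexists. apply Hder, H, Hx.
    + refine (filter_imp _ _ _ HD). intros [a b] H x Hx.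
      apply (continuous_ext_loc _ f); [|apply Hcont, H, Hx].
      refine (filter_imp _ _ _ (HDo x (H x Hx))). intros y Hy.
      symmetry. apply is_derive_unique, Hder, Hy.
Qed.

Lemma line_int_derive (f P : R -> R) (la lb l : R) :
  (forall x, is_derive P x (f x)) -> (forall x, continuous f x) ->
  is_lim P m_infty la -> is_lim P p_infty lb -> lb - la = l -> line_int f l.
Proof.
  intros Hder Hcont Ha Hb <-. apply (is_RInt_gen_derive (fun _ => True) f P); auto.
  - apply open_true.
  - exists (fun _ => True) (fun _ => True); try exists 0; auto.
Qed.

Lemma halfline_int_derive (f P : R -> R) (la lb l : R) :
  (forall x, 0 < x -> is_derive P x (f x)) -> (forall x, 0 < x -> continuous f x) ->
  filterlim P (at_right 0) (locally la) -> is_lim P p_infty lb -> lb - la = l ->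
  halfline_int f l.
Proof.
  intros Hder Hcont Ha Hb <-. apply (is_RInt_gen_derive (fun x => 0 < x) f P); auto.
  - apply open_gt.
  - exists (fun a => 0 < a) (fun b => 0 < b).
    + exists (mkposreal 1 Rlt_0_1). auto.
    + exists 0. auto.
    + intros a b Ha0 Hb0 x Hx. simpl in Hx.
      assert (0 < Rmin a b) by (apply Rmin_glb_lt; auto). lra.
Qed.

Lemma exp_le_exp_of_le x y : x <= y -> exp x <= exp y.
Proof. intros [Hlt | ->]; [left; apply exp_increasing |]; lra. Qed.

Lemma exp_le_1 x : x <= 0 -> exp x <= 1.
Proof. intros Hx. rewrite <- exp_0. apply exp_le_exp_of_le, Hx. Qed.

Lemma exp_opp_le_inv y : 0 <= y -> exp (- y) <= / (1 + y).
Proof. intros Hy. rewrite exp_Ropp. apply Rinv_le_contravar; [lra | apply exp_ineq1_le]. Qed.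

Lemma is_lim_scal_0 (f : R -> R) k x : is_lim f x 0 -> is_lim (fun y => k * f y) x 0.
Proof.
  intros Hf. replace (Finite 0) with (Rbar_mult k 0) by (simpl; f_equal; ring).
  now apply is_lim_scal_l.
Qed.

Lemma is_lim_affine_p_infty r v : 0 < r -> is_lim (fun x => r * x + v) p_infty p_infty.
Proof.
  intros Hr. apply is_lim_spec. intros M. exists ((M - v) / r). intros x Hx.
  apply Rmult_lt_compat_l with (r := r) in Hx; [|lra].
  replace (r * ((M - v) / r)) with (M - v) in Hx by (field; lra). lra.
Qed.

Lemma is_lim_m_infty_of_opp (P : R -> R) (l : Rbar) :
  is_lim (fun x => P (- x)) p_infty l -> is_lim P m_infty l.
Proof.
  intros HP. apply (is_lim_ext (fun x => P (- - x))); [intros; now rewrite Ropp_involutive|].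
  apply (is_lim_comp (fun x => P (- x)) Ropp m_infty l p_infty); [exact HP | |].
  - apply (is_lim_opp (fun x => x) m_infty m_infty), is_lim_id.
  - exists 0. intros. discriminate.
Qed.

Lemma is_lim_0_of_inv_bound (P : R -> R) K :
  (forall x, 1 <= x -> Rabs (P x) <= K / x) -> is_lim P p_infty 0.
Proof.
  intros HB.
  assert (Hinv : is_lim (fun x => K / x) p_infty 0).
  { replace (Finite 0) with (Rbar_mult K 0) by (simpl; f_equal; ring).
    apply (is_lim_scal_l (fun x => / x)).
    apply (is_lim_inv (fun x => x) p_infty p_infty); [apply is_lim_id | discriminate]. }
  apply (is_lim_le_le_loc (fun x => - (K / x)) (fun x => K / x)).
  - exists 1. intros x Hx. apply Rabs_le_between, HB. lra.
  - replace (Finite 0) with (Rbar_opp 0) by (simpl; f_equal; ring). apply is_lim_opp, Hinv.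
  - exact Hinv.
Qed.

Lemma is_lim_exp_opp_scal_sqr a : 0 < a -> is_lim (fun x => exp (- a * x ^ 2)) p_infty 0.
Proof.
  intros Ha.
  apply (is_lim_comp exp (fun x => - a * x ^ 2) p_infty 0 m_infty); [apply is_lim_exp_m | |].
  - apply (is_lim_le_m_loc (fun x => - x)).
    + exists (/ a). intros x Hx. assert (1 < a * x).
      { apply Rmult_lt_compat_l with (r := a) in Hx; [|exact Ha]. rewrite Rinv_r in Hx; lra. }
      assert (0 < x) by (pose proof (Rinv_0_lt_compat a Ha); lra). nra.
    + apply (is_lim_opp (fun x => x) p_infty p_infty), is_lim_id.
  - exists 0. intros. discriminate.
Qed.

Lemma is_lim_x_exp_opp_scal_sqr a : 0 < a -> is_lim (fun x => x * exp (- a * x ^ 2)) p_infty 0.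
Proof.
  intros Ha. apply is_lim_0_of_inv_bound with (/ a). intros x Hx.
  assert (Hb : exp (- a * x ^ 2) * (1 + a * x ^ 2) <= 1).
  { replace (- a * x ^ 2) with (- (a * x ^ 2)) by ring.
    pose proof (exp_opp_le_inv (a * x ^ 2) ltac:(nra)).
    apply Rmult_le_compat_r with (r := 1 + a * x ^ 2) in H; [|nra].
    rewrite Rinv_l in H; nra. }
  pose proof (exp_pos (- a * x ^ 2)).
  rewrite Rabs_right by nra. apply Rmult_le_reg_r with (a * x); [nra|].
  replace (/ a / x * (a * x)) with 1 by (field; lra). nra.
Qed.

Lemma filterlim_Rminus {T : Type} {F : (T -> Prop) -> Prop} {FF : Filter F}
  (f g : T -> R) (a b : R) :
  filterlim f F (locally a) -> filterlim g F (locally b) ->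
  filterlim (fun x => f x - g x) F (locally (a - b)).
Proof.
  intros Hf Hg.
  apply (filterlim_comp_2 (G := locally a) (H := locally (opp b)) f (fun x => opp (g x)) plus Hf).
  - apply (filterlim_comp _ _ _ g opp _ (locally b) _ Hg (filterlim_opp b)).
  - apply (filterlim_plus a (opp b)).
Qed.

Lemma filterlim_scal_sqr_at_right_0 k :
  0 < k -> filterlim (fun x => k * x ^ 2) (at_right 0) (at_right 0).
Proof.
  intros Hk Q [eps HQ].
  assert (Hd : 0 < Rmin 1 (eps / k))
    by (apply Rmin_glb_lt; [lra | apply Rdiv_lt_0_compat; [apply cond_pos | exact Hk]]).
  exists (mkposreal _ Hd). intros x Hx Hx0. change (Rabs (x - 0) < Rmin 1 (eps / k)) in Hx.
  rewrite Rminus_0_r, Rabs_right in Hx by lra.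
  pose proof (Rmin_l 1 (eps / k)). pose proof (Rmin_r 1 (eps / k)).
  apply HQ; [|apply Rmult_lt_0_compat; [exact Hk | apply pow_lt, Hx0]].
  change (Rabs (k * x ^ 2 - 0) < eps). rewrite Rminus_0_r, Rabs_right by (apply Rle_ge; nra).
  assert (k * x < eps).
  { replace (pos eps) with (k * (eps / k)) by (field; lra). apply Rmult_lt_compat_l; lra. }
  assert (x < 1) by lra. assert (0 < k * x) by nra. nra.
Qed.

Lemma is_lim_scal_sqr_p_infty k : 0 < k -> is_lim (fun x => k * x ^ 2) p_infty p_infty.
Proof.
  intros Hk. apply (is_lim_le_p_loc (fun x => k * x + 0)); [|apply is_lim_affine_p_infty, Hk].
  exists 1. intros x Hx. assert (0 < k * x) by nra. nra.
Qed.

Lemma limits_scal_comp_scal_sqr (P : R -> R) (L0 L1 k K : R) : 0 < k ->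
  filterlim P (at_right 0) (locally L0) -> is_lim P p_infty L1 ->
  filterlim (fun x => K * P (k * x ^ 2)) (at_right 0) (locally (K * L0)) /\
  is_lim (fun x => K * P (k * x ^ 2)) p_infty (K * L1).
Proof.
  intros Hk H0 H1. split.
  - apply (filterlim_comp _ _ _ (fun x => P (k * x ^ 2)) (Rmult K) _ (locally L0)).
    + apply (filterlim_comp _ _ _ (fun x => k * x ^ 2) P _ (at_right 0)); [|exact H0].
      apply filterlim_scal_sqr_at_right_0, Hk.
    + apply (filterlim_scal_r K L0).
  - apply (is_lim_scal_l (fun x => P (k * x ^ 2)) K p_infty L1).
    apply (is_lim_comp P (fun x => k * x ^ 2) p_infty L1 p_infty);
      [exact H1 | apply is_lim_scal_sqr_p_infty, Hk |].
    exists 0. intros. discriminate.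
Qed.

Lemma is_lim_p_infty_of_incr_bounded (P : R -> R) a B :
  (forall x y, a <= x <= y -> P x <= P y) -> (forall x, a <= x -> P x <= B) ->
  exists L : R, is_lim P p_infty L /\ forall x, a <= x -> P x <= L.
Proof.
  intros Hincr Hbnd.
  set (E := fun z => exists x, a <= x /\ z = P x).
  destruct (completeness E) as [L [HL1 HL2]].
  - exists B. intros z [x [Hx ->]]. auto.
  - exists (P a), a. split; [lra | reflexivity].
  - assert (Hub : forall x, a <= x -> P x <= L) by (intros x Hx; apply HL1; exists x; auto).
    exists L. split; [|exact Hub].
    apply is_lim_spec. intros eps.
    destruct (classic (exists x, a <= x /\ L - eps < P x)) as [[x0 [Hx0 Hlt]] | Hn].
    + exists x0. intros x Hx. pose proof (Hub x ltac:(lra)). pose proof (Hincr x0 x ltac:(lra)).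
      apply Rabs_def1; lra.
    + exfalso. pose proof (cond_pos eps). assert (L <= L - eps); [|lra].
      apply HL2. intros z [x [Hx ->]]. apply Rnot_lt_le. intros Hlt. apply Hn. exists x; auto.
Qed.

(* Reduced to the previous lemma through [x |-> 1 / x]. *)
Lemma at_right_0_lim_of_incr_bounded (P : R -> R) B :
  (forall x y, 0 < x <= y -> y <= 1 -> P x <= P y) -> (forall x, 0 < x <= 1 -> B <= P x) ->
  exists L, filterlim P (at_right 0) (locally L) /\ forall x, 0 < x <= 1 -> L <= P x.
Proof.
  intros Hincr Hbnd.
  destruct (is_lim_p_infty_of_incr_bounded (fun x => - P (/ x)) 1 (- B)) as [L [HL Hub]].
  - intros x y Hxy. assert (0 < x * y) by nra. apply Ropp_le_contravar, Hincr.
    + split; [apply Rinv_0_lt_compat; lra | apply Rinv_le_contravar; lra].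
    + rewrite <- Rinv_1. apply Rinv_le_contravar; lra.
  - intros x Hx. apply Ropp_le_contravar, Hbnd. split; [apply Rinv_0_lt_compat; lra|].
    rewrite <- Rinv_1. apply Rinv_le_contravar; lra.
  - exists (- L). split.
    + apply (filterlim_ext_loc (fun x => - (- P (/ / x)))).
      * exists (mkposreal 1 Rlt_0_1). intros x _ Hx. rewrite Rinv_inv. ring.
      * apply (filterlim_comp _ _ _ (fun x => - P (/ / x)) Ropp _ (locally L)).
        -- apply (filterlim_comp _ _ _ Rinv (fun x => - P (/ x)) _ (Rbar_locally p_infty));
             [apply filterlim_Rinv_0_right | exact HL].
        -- apply (filterlim_opp L).
    + intros x Hx. pose proof (Hub (/ x)) as H. rewrite Rinv_inv in H.
      enough (H1 : 1 <= / x) by (specialize (H H1); lra).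
      rewrite <- Rinv_1. apply Rinv_le_contravar; lra.
Qed.

(** * The Gaussian integral *)

Definition gauss (t : R) : R := exp (- t ^ 2).

Definition gauss_int (x : R) : R := RInt gauss 0 x.

Lemma continuous_gauss x : continuous gauss x.
Proof. apply continuous_of_ex_derive. unfold gauss. auto_derive. auto. Qed.

Lemma ex_RInt_gauss a b : ex_RInt gauss a b.
Proof. apply ex_RInt_of_continuous. intros; apply continuous_gauss. Qed.

Lemma is_derive_gauss_int x : is_derive gauss_int x (gauss x).
Proof.
  apply is_derive_RInt with (a := 0); [|apply continuous_gauss].
  apply filter_forall. intros y. apply (RInt_correct (V := R_CompleteNormedModule)), ex_RInt_gauss.
Qed.

Lemma gauss_int_ge0 x : 0 <= x -> 0 <= gauss_int x.
Proof.
  intros Hx. apply RInt_ge_0; [exact Hx | apply ex_RInt_gauss |].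
  intros; apply Rlt_le, exp_pos.
Qed.

Lemma gauss_int_opp x : gauss_int (- x) = - gauss_int x.
Proof.
  unfold gauss_int.
  transitivity (RInt (fun t => scal (-1) (gauss (-1 * t + 0))) 0 x).
  - rewrite (RInt_comp_lin (V := R_CompleteNormedModule)); [f_equal; ring | apply ex_RInt_gauss].
  - transitivity (RInt (fun t => scal (-1) (gauss t)) 0 x).
    + apply RInt_ext. intros t _. unfold gauss. do 3 f_equal. ring.
    + rewrite (RInt_scal (V := R_CompleteNormedModule)); [|apply ex_RInt_gauss].
      unfold scal; simpl; unfold mult; simpl. ring.
Qed.

(* [gauss_int x ^ 2 + gauss_aux x] is constant, and [gauss_aux] vanishes at infinity. *)
Definition gauss_aux_integrand (x t : R) : R := exp (- (x ^ 2 * (1 + t ^ 2))) / (1 + t ^ 2).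

Definition gauss_aux (x : R) : R := RInt (gauss_aux_integrand x) 0 1.

Lemma one_add_sqr_pos t : 0 < 1 + t ^ 2.
Proof. nra. Qed.

Lemma ex_RInt_gauss_aux_integrand x a b : ex_RInt (gauss_aux_integrand x) a b.
Proof.
  apply ex_RInt_of_continuous. intros t _. apply continuous_of_ex_derive.
  unfold gauss_aux_integrand. auto_derive. pose proof (one_add_sqr_pos t); lra.
Qed.

Lemma is_derive_gauss_aux_integrand x t :
  is_derive (fun z => gauss_aux_integrand z t) x (- 2 * x * exp (- (x ^ 2 * (1 + t ^ 2)))).
Proof.
  pose proof (one_add_sqr_pos t). unfold gauss_aux_integrand. auto_derive; [lra|].
  replace (x * (x * 1) * (1 + t * (t * 1))) with (x ^ 2 * (1 + t ^ 2)) by ring. field. lra.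
Qed.

Lemma continuity_2d_pt_derive_gauss_aux_integrand x t :
  continuity_2d_pt (fun u v => Derive (fun z => gauss_aux_integrand z v) u) x t.
Proof.
  apply continuity_2d_pt_ext with (f := fun u v => - (2 * u * exp (- ((u * u) * (1 + v * v))))).
  { intros u v. symmetry. apply is_derive_unique.
    replace (- (2 * u * exp (- (u * u * (1 + v * v)))))
      with (- 2 * u * exp (- (u ^ 2 * (1 + v ^ 2))))
      by (simpl; rewrite !Rmult_1_r; ring).
    apply is_derive_gauss_aux_integrand. }
  repeat first
    [ apply continuity_2d_pt_opp | apply continuity_2d_pt_mult | apply continuity_2d_pt_plus
    | apply continuity_2d_pt_const | apply continuity_2d_pt_id1 | apply continuity_2d_pt_id2
    | apply continuity_1d_2d_pt_comp with (f := exp);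
      [apply derivable_continuous_pt, derivable_pt_exp |] ].
Qed.

Lemma RInt_derive_gauss_aux_integrand x :
  RInt (fun t => Derive (fun u => gauss_aux_integrand u t) x) 0 1 = - 2 * gauss x * gauss_int x.
Proof.
  transitivity (RInt (fun t => scal (- 2 * gauss x) (scal x (gauss (x * t + 0)))) 0 1).
  { apply RInt_ext. intros t _.
    etransitivity; [apply is_derive_unique, is_derive_gauss_aux_integrand |].
    unfold gauss, scal; simpl; unfold mult; simpl.
    replace (- (x * (x * 1) * (1 + t * (t * 1))))
      with (- (x * (x * 1)) + - ((x * t + 0) * ((x * t + 0) * 1))) by ring.
    rewrite exp_plus. ring. }
  rewrite (RInt_scal (V := R_CompleteNormedModule)).
  2:{ apply ex_RInt_of_continuous. intros. apply continuous_of_ex_derive.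
      unfold gauss, scal; simpl; unfold mult; simpl. auto_derive. auto. }
  rewrite (RInt_comp_lin (V := R_CompleteNormedModule)); [|apply ex_RInt_gauss].
  unfold gauss_int, scal; simpl; unfold mult; simpl.
  replace (x * 0 + 0) with 0 by ring. replace (x * 1 + 0) with x by ring. reflexivity.
Qed.

Lemma is_derive_gauss_aux x : is_derive gauss_aux x (- 2 * gauss x * gauss_int x).
Proof.
  rewrite <- RInt_derive_gauss_aux_integrand.
  apply (is_derive_RInt_param gauss_aux_integrand).
  - apply filter_forall. intros y t _. eexists. apply is_derive_gauss_aux_integrand.
  - intros t _. apply continuity_2d_pt_derive_gauss_aux_integrand.
  - apply filter_forall. intros y. apply ex_RInt_gauss_aux_integrand.
Qed.

Lemma gauss_aux_0 : gauss_aux 0 = PI / 4.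
Proof.
  unfold gauss_aux. rewrite <- atan_1.
  replace (RInt (gauss_aux_integrand 0) 0 1) with (RInt (fun t => / (1 + t ^ 2)) 0 1).
  2:{ apply RInt_ext. intros t _. unfold gauss_aux_integrand.
      replace (- (0 ^ 2 * (1 + t ^ 2))) with 0 by ring.
      rewrite exp_0. unfold Rdiv. now rewrite Rmult_1_l. }
  rewrite (is_RInt_unique _ 0 1 (minus (atan 1) (atan 0))).
  - rewrite atan_0. unfold minus, plus, opp; simpl. ring.
  - apply (is_RInt_derive atan).
    + intros. apply is_derive_Reals, derivable_pt_lim_atan.
    + intros. apply continuous_of_ex_derive. auto_derive. pose proof (one_add_sqr_pos x); lra.
Qed.

Lemma is_derive_gauss_int_sqr_add_aux x :
  is_derive (fun x => gauss_int x ^ 2 + gauss_aux x) x 0.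
Proof.
  replace 0 with (plus (INR 2 * gauss x * gauss_int x ^ 1) (- 2 * gauss x * gauss_int x))
    by (unfold plus; simpl; ring).
  apply (is_derive_plus (fun x => gauss_int x ^ 2) gauss_aux).
  - apply (is_derive_pow gauss_int 2), is_derive_gauss_int.
  - apply is_derive_gauss_aux.
Qed.

Lemma gauss_int_sqr_add_aux x : gauss_int x ^ 2 + gauss_aux x = PI / 4.
Proof.
  rewrite <- gauss_aux_0.
  replace (gauss_aux 0) with (gauss_int 0 ^ 2 + gauss_aux 0).
  2:{ unfold gauss_int. rewrite RInt_point. change (0 ^ 2 + gauss_aux 0 = gauss_aux 0). ring. }
  set (h := fun x => gauss_int x ^ 2 + gauss_aux x). change (h x = h 0).
  destruct (Rtotal_order x 0) as [Hx | [-> | Hx]]; [| reflexivity |].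
  - apply eq_is_derive; [intros; apply is_derive_gauss_int_sqr_add_aux | exact Hx].
  - symmetry. apply eq_is_derive; [intros; apply is_derive_gauss_int_sqr_add_aux | exact Hx].
Qed.

Lemma gauss_aux_bounds x : 0 <= gauss_aux x <= exp (- x ^ 2).
Proof.
  unfold gauss_aux. split.
  - apply RInt_ge_0; [lra | apply ex_RInt_gauss_aux_integrand |]. intros t _.
    apply Rle_mult_inv_pos; [apply Rlt_le, exp_pos | apply one_add_sqr_pos].
  - apply Rle_trans with (RInt (fun _ => exp (- x ^ 2)) 0 1).
    + apply RInt_le; [lra | apply ex_RInt_gauss_aux_integrand | apply ex_RInt_const |].
      intros t _. unfold gauss_aux_integrand. pose proof (one_add_sqr_pos t).
      assert (exp (- (x ^ 2 * (1 + t ^ 2))) <= exp (- x ^ 2)) by (apply exp_le_exp_of_le; nra).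
      assert (0 < / (1 + t ^ 2) <= 1).
      { split; [apply Rinv_0_lt_compat; lra | rewrite <- Rinv_1; apply Rinv_le_contravar; nra]. }
      pose proof (exp_pos (- (x ^ 2 * (1 + t ^ 2)))). unfold Rdiv. nra.
    + rewrite RInt_const. unfold scal; simpl; unfold mult; simpl. lra.
Qed.

Lemma is_lim_gauss_int : is_lim gauss_int p_infty (sqrt PI / 2).
Proof.
  apply (is_lim_ext_loc (fun x => sqrt (PI / 4 - gauss_aux x))).
  { exists 0. intros x Hx. rewrite <- (gauss_int_sqr_add_aux x), Rplus_minus_r.
    apply sqrt_pow2, gauss_int_ge0. lra. }
  assert (Haux : is_lim gauss_aux p_infty 0).
  { apply (is_lim_le_le_loc (fun _ => 0) (fun x => exp (- x ^ 2)));
      [exists 0; intros; apply gauss_aux_bounds | apply is_lim_const |].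
    apply (is_lim_ext (fun x => exp (- 1 * x ^ 2))); [intros; f_equal; ring|].
    apply is_lim_exp_opp_scal_sqr, Rlt_0_1. }
  replace (sqrt PI / 2) with (sqrt (PI / 4 - 0)).
  2:{ rewrite Rminus_0_r, sqrt_div_alt by lra. replace 4 with (2 ^ 2) by ring.
      rewrite sqrt_pow2; lra. }
  apply (filterlim_comp _ _ _ (fun x => PI / 4 - gauss_aux x) sqrt _ (locally (PI / 4 - 0))).
  - apply (is_lim_minus' (fun _ => PI / 4) gauss_aux p_infty); [apply is_lim_const | exact Haux].
  - apply continuous_sqrt.
Qed.

Lemma is_lim_scal_gauss_int_affine k r v :
  0 < r -> is_lim (fun x => k * gauss_int (r * x + v)) p_infty (k * (sqrt PI / 2)).
Proof.
  intros Hr. apply (is_lim_scal_l (fun x => gauss_int (r * x + v)) k p_infty (sqrt PI / 2)).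
  apply (is_lim_comp gauss_int (fun x => r * x + v) p_infty _ p_infty);
    [apply is_lim_gauss_int | apply is_lim_affine_p_infty, Hr |].
  exists 0. intros. discriminate.
Qed.

Lemma line_int_exp_quadratic a b c : 0 < a ->
  line_int (fun x => exp (- a * x ^ 2 + b * x + c)) (sqrt (PI / a) * exp (b ^ 2 / (4 * a) + c)).
Proof.
  intros Ha. set (r := sqrt a). assert (Hr : 0 < r) by (apply sqrt_lt_R0, Ha).
  assert (Hr2 : r * r = a) by (apply sqrt_sqrt; lra).
  set (v := - b / (2 * r)). set (C := exp (b ^ 2 / (4 * a) + c)).
  apply (line_int_derive _ (fun x => C / r * gauss_int (r * x + v))
    (- C / r * (sqrt PI / 2)) (C / r * (sqrt PI / 2))).
  - intros x. evar (l : R). replace (exp (- a * x ^ 2 + b * x + c)) with l.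
    + apply (is_derive_scal (fun x => gauss_int (r * x + v))).
      apply (is_derive_comp gauss_int (fun x => r * x + v)); [apply is_derive_gauss_int |].
      auto_derive; [exact I | reflexivity].
    + unfold l, C, gauss.
      change (scal (r * 1) (exp (- (r * x + v) ^ 2))) with (r * 1 * exp (- (r * x + v) ^ 2)).
      rewrite <- Hr2, Rmult_1_r.
      replace (exp (b ^ 2 / (4 * (r * r)) + c) / r * (r * exp (- (r * x + v) ^ 2)))
        with (exp (b ^ 2 / (4 * (r * r)) + c) * exp (- (r * x + v) ^ 2)) by (field; lra).
      rewrite <- exp_plus. f_equal. unfold v. field. lra.
  - intros x. apply continuous_of_ex_derive. auto_derive. exact I.
  - apply is_lim_m_infty_of_opp.
    apply (is_lim_ext (fun x => - C / r * gauss_int (r * x + - v))).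
    { intros x. replace (r * - x + v) with (- (r * x + - v)) by ring.
      rewrite gauss_int_opp. field. lra. }
    apply is_lim_scal_gauss_int_affine, Hr.
  - apply is_lim_scal_gauss_int_affine, Hr.
  - rewrite sqrt_div_alt by exact Ha. fold r. field. lra.
Qed.

Lemma line_int_exp_sqr a : 0 < a -> line_int (fun x => exp (- a * x ^ 2)) (sqrt (PI / a)).
Proof.
  intros Ha. refine (line_int_ext _ _ _ _ _ _ (line_int_exp_quadratic a 0 0 Ha)).
  - intros x. f_equal. ring.
  - replace (0 ^ 2 / (4 * a) + 0) with 0 by (field; lra). rewrite exp_0. ring.
Qed.

Lemma line_int_x_exp_sqr a : 0 < a -> line_int (fun x => x * exp (- a * x ^ 2)) 0.
Proof.
  intros Ha.
  apply (line_int_derive _ (fun x => - / (2 * a) * exp (- a * x ^ 2)) 0 0); [| | | | ring].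
  - intros x. auto_derive; [exact I|]. simpl. field. lra.
  - intros x. apply continuous_of_ex_derive. auto_derive. exact I.
  - apply is_lim_m_infty_of_opp, (is_lim_ext (fun x => - / (2 * a) * exp (- a * x ^ 2))).
    { intros x. do 3 f_equal. ring. }
    apply is_lim_scal_0, is_lim_exp_opp_scal_sqr, Ha.
  - apply is_lim_scal_0, is_lim_exp_opp_scal_sqr, Ha.
Qed.

Lemma line_int_sqr_exp_sqr a : 0 < a ->
  line_int (fun x => x ^ 2 * exp (- a * x ^ 2)) (sqrt (PI / a) / (2 * a)).
Proof.
  intros Ha.
  assert (Hd : line_int (fun x => exp (- a * x ^ 2) - 2 * a * (x ^ 2 * exp (- a * x ^ 2))) 0).
  { apply (line_int_derive _ (fun x => x * exp (- a * x ^ 2)) 0 0); [| | | | ring].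
    - intros x. auto_derive; [exact I|]. simpl. ring.
    - intros x. apply continuous_of_ex_derive. auto_derive. exact I.
    - apply is_lim_m_infty_of_opp, (is_lim_ext (fun x => -1 * (x * exp (- a * x ^ 2)))).
      { intros x. replace ((- x) ^ 2) with (x ^ 2) by ring. ring. }
      apply is_lim_scal_0, is_lim_x_exp_opp_scal_sqr, Ha.
    - apply is_lim_x_exp_opp_scal_sqr, Ha. }
  pose proof (is_RInt_gen_minus _ _ _ _ (line_int_exp_sqr a Ha) Hd) as Hm.
  refine (line_int_ext _ _ _ _ _ _ (is_RInt_gen_scal _ (/ (2 * a)) _ Hm)).
  - intros x. unfold scal, minus, plus, opp; simpl; unfold mult; simpl. field. lra.
  - unfold scal, minus, plus, opp; simpl; unfold mult; simpl. field. lra.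
Qed.

Lemma gauss_pdf_eq sg x : 0 < sg ->
  gauss_pdf sg x = / (sqrt (2 * PI) * sg) * exp (- / (2 * sg ^ 2) * x ^ 2).
Proof. intros Hs. unfold gauss_pdf, Rdiv. rewrite Rmult_comm. do 2 f_equal. field. lra. Qed.

Lemma sqrt_PI_div_gauss_coef sg D : 0 < sg -> 0 < D ->
  sqrt (PI / (D / (2 * sg ^ 2))) = sqrt (2 * PI) * sg / sqrt D.
Proof.
  intros Hs HD. replace (PI / (D / (2 * sg ^ 2))) with (2 * PI * sg ^ 2 / D) by (field; lra).
  rewrite sqrt_div_alt, sqrt_mult, sqrt_pow2 by (pose proof PI_RGT_0; nra). reflexivity.
Qed.

Definition sqr_gauss_log_mgf (sg t a : R) : R :=
  - / 2 * ln (1 - 2 * t * sg ^ 2) + t * a ^ 2 / (1 - 2 * t * sg ^ 2).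

Lemma line_int_gauss_pdf_exp_sqr_shift sg t a : 0 < sg -> t <= 0 ->
  line_int (fun x => gauss_pdf sg x * exp (t * (x + a) ^ 2)) (exp (sqr_gauss_log_mgf sg t a)).
Proof.
  intros Hs Ht. set (D := 1 - 2 * t * sg ^ 2). assert (HD : 0 < D) by (unfold D; nra).
  assert (Hpi : 0 < sqrt (2 * PI)) by (apply sqrt_lt_R0; pose proof PI_RGT_0; lra).
  assert (Hal : 0 < D / (2 * sg ^ 2)) by (apply Rdiv_lt_0_compat; nra).
  refine (line_int_ext _ _ _ _ _ _ (is_RInt_gen_scal _ (/ (sqrt (2 * PI) * sg)) _
    (line_int_exp_quadratic (D / (2 * sg ^ 2)) (2 * t * a) (t * a ^ 2) Hal))).
  - intros x. rewrite gauss_pdf_eq by exact Hs. rewrite scal_R, (Rmult_assoc (/ _)), <- exp_plus.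
    do 2 f_equal. unfold D. field. lra.
  - rewrite scal_R, sqrt_PI_div_gauss_coef by assumption.
    replace ((2 * t * a) ^ 2 / (4 * (D / (2 * sg ^ 2))) + t * a ^ 2) with (t * a ^ 2 / D)
      by (unfold D; field; split; [lra | fold D; lra]).
    unfold sqr_gauss_log_mgf. fold D. rewrite exp_plus.
    replace (exp (- / 2 * ln D)) with (/ sqrt D)
      by (rewrite <- Rpower_sqrt, <- Rpower_Ropp by exact HD; unfold Rpower; f_equal; ring).
    pose proof (sqrt_lt_R0 D HD). field. lra.
Qed.

Lemma line_int_gauss_pdf sg : 0 < sg -> line_int (gauss_pdf sg) 1.
Proof.
  intros Hs.
  refine (line_int_ext _ _ _ _ _ _ (line_int_gauss_pdf_exp_sqr_shift sg 0 0 Hs (Rle_refl 0))).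
  - intros x. rewrite Rmult_0_l, exp_0. ring.
  - unfold sqr_gauss_log_mgf. replace (1 - 2 * 0 * sg ^ 2) with 1 by ring.
    rewrite ln_1. replace (- / 2 * 0 + 0 * 0 ^ 2 / 1) with 0 by field. apply exp_0.
Qed.

Lemma line_int_gauss_pdf_sqr_shift sg a : 0 < sg ->
  line_int (fun x => gauss_pdf sg x * (x + a) ^ 2) (sg ^ 2 + a ^ 2).
Proof.
  intros Hs. set (al := / (2 * sg ^ 2)). assert (Hal : 0 < al) by (apply Rinv_0_lt_compat; nra).
  pose proof (is_RInt_gen_plus _ _ _ _ (line_int_sqr_exp_sqr al Hal)
    (is_RInt_gen_plus _ _ _ _ (is_RInt_gen_scal _ (2 * a) _ (line_int_x_exp_sqr al Hal))
      (is_RInt_gen_scal _ (a ^ 2) _ (line_int_exp_sqr al Hal)))) as H.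
  assert (Hpi : 0 < sqrt (2 * PI)) by (apply sqrt_lt_R0; pose proof PI_RGT_0; lra).
  refine (line_int_ext _ _ _ _ _ _ (is_RInt_gen_scal _ (/ (sqrt (2 * PI) * sg)) _ H)).
  - intros x. rewrite gauss_pdf_eq by exact Hs. fold al.
    unfold scal, plus; simpl; unfold mult; simpl. ring.
  - unfold scal, plus; simpl; unfold mult; simpl.
    replace al with (1 / (2 * sg ^ 2)) by (unfold al; field; lra).
    rewrite sqrt_PI_div_gauss_coef by lra. rewrite sqrt_1. field. lra.
Qed.

(** * The Gamma function *)

Lemma Rpower_gt_0 x a : 0 < Rpower x a.
Proof. apply exp_pos. Qed.

Lemma is_derive_Rpower_base a t : 0 < t -> is_derive (fun x => Rpower x a) t (a * Rpower t (a - 1)).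
Proof. intros Ht. apply is_derive_Reals, derivable_pt_lim_power, Ht. Qed.

Lemma continuous_Rpower_base a t : 0 < t -> continuous (fun x => Rpower x a) t.
Proof. intros Ht. apply continuous_of_ex_derive. eexists. apply is_derive_Rpower_base, Ht. Qed.

(* With [k = n + 1]: [t / (2 k) <= exp (t / (2 k))], raised to the power [k]. *)
Lemma pow_le_exp_half n t : 0 <= t -> t ^ S n <= (2 * INR (S n)) ^ S n * exp (t / 2).
Proof.
  intros Ht. set (k := INR (S n)). assert (Hk : 0 < k) by (apply lt_0_INR; lia).
  assert (Hu : 0 <= t / (2 * k)) by (apply Rdiv_le_0_compat; lra).
  replace (exp (t / 2)) with (exp (t / (2 * k)) ^ S n).
  2:{ rewrite <- Rpower_pow by apply exp_pos. unfold Rpower. rewrite ln_exp.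
      f_equal. fold k. field. lra. }
  replace (t ^ S n) with ((2 * k) ^ S n * (t / (2 * k)) ^ S n)
    by (rewrite <- Rpow_mult_distr; f_equal; field; lra).
  apply Rmult_le_compat_l; [apply pow_le; lra|].
  apply pow_incr. pose proof (exp_ineq1_le (t / (2 * k))). lra.
Qed.

Lemma Rpower_exp_bound m :
  exists K, 0 < K /\ forall t, 1 <= t -> Rpower t m * exp (- t) <= K * exp (- (t / 2)).
Proof.
  destruct (INR_unbounded m) as [n Hn].
  exists ((2 * INR (S n)) ^ S n). split.
  { apply pow_lt. pose proof (lt_0_INR (S n) ltac:(lia)). lra. }
  intros t Ht.
  apply Rle_trans with (t ^ S n * exp (- t)).
  - apply Rmult_le_compat_r; [apply Rlt_le, exp_pos|].
    rewrite <- Rpower_pow by lra. apply Rle_Rpower; [lra|]. rewrite S_INR. lra.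
  - replace (exp (- t)) with (exp (- (t / 2)) * exp (- (t / 2)))
      by (rewrite <- exp_plus; f_equal; field).
    assert (E : exp (t / 2) * exp (- (t / 2)) = 1)
      by (rewrite <- exp_plus, <- exp_0; f_equal; ring).
    apply Rle_trans
      with ((2 * INR (S n)) ^ S n * exp (t / 2) * (exp (- (t / 2)) * exp (- (t / 2)))).
    + apply Rmult_le_compat_r; [pose proof (exp_pos (- (t / 2))); nra|].
      apply pow_le_exp_half. lra.
    + right. rewrite <- Rmult_assoc, (Rmult_assoc _ (exp (t / 2))), E. ring.
Qed.

Lemma filterlim_Rpower_at_right_0 m :
  0 < m -> filterlim (fun t => Rpower t m) (at_right 0) (locally 0).
Proof.
  intros Hm. apply filterlim_locally. intros eps.
  exists (mkposreal _ (Rpower_gt_0 eps (/ m))). intros t Ht Ht0. simpl in Ht0.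
  change (Rabs (t - 0) < Rpower eps (/ m)) in Ht. rewrite Rminus_0_r, Rabs_right in Ht by lra.
  change (Rabs (Rpower t m - 0) < eps).
  rewrite Rminus_0_r, Rabs_right by (apply Rle_ge, Rlt_le, Rpower_gt_0).
  replace (pos eps) with (Rpower (Rpower eps (/ m)) m)
    by (rewrite Rpower_mult, Rinv_l, Rpower_1 by (apply cond_pos || lra); reflexivity).
  apply Rlt_Rpower_l; lra.
Qed.

Lemma Rpower_exp_opp_lim m : 0 < m ->
  filterlim (fun t => Rpower t m * exp (- t)) (at_right 0) (locally 0) /\
  is_lim (fun t => Rpower t m * exp (- t)) p_infty 0.
Proof.
  intros Hm. split.
  - apply (filterlim_le_le (fun _ => 0) _ (fun t => Rpower t m) 0);
      [| apply filterlim_const | apply filterlim_Rpower_at_right_0, Hm].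
    exists (mkposreal 1 Rlt_0_1). intros t Ht Ht0. simpl in Ht0.
    change (Rabs (t - 0) < 1) in Ht. rewrite Rminus_0_r, Rabs_right in Ht by lra.
    pose proof (Rpower_gt_0 t m). pose proof (exp_le_1 (- t) ltac:(lra)).
    pose proof (exp_pos (- t)).
    split; nra.
  - destruct (Rpower_exp_bound m) as [K [HK HB]].
    apply is_lim_0_of_inv_bound with (2 * K). intros t Ht.
    pose proof (Rpower_gt_0 t m). pose proof (exp_pos (- t)).
    rewrite Rabs_right by nra. apply Rle_trans with (K * exp (- (t / 2))); [apply HB, Ht|].
    apply Rle_trans with (K * / (1 + t / 2)).
    + apply Rmult_le_compat_l; [lra | apply exp_opp_le_inv; lra].
    + apply Rmult_le_reg_r with (t * (1 + t / 2)); [nra|].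
      replace (K * / (1 + t / 2) * (t * (1 + t / 2))) with (K * t) by (field; lra).
      replace (2 * K / t * (t * (1 + t / 2))) with (2 * K * (1 + t / 2)) by (field; lra). nra.
Qed.

Definition gamma_kernel (m t : R) : R := Rpower t (m - 1) * exp (- t).

Lemma gamma_kernel_pos m t : 0 < gamma_kernel m t.
Proof. apply Rmult_lt_0_compat; [apply Rpower_gt_0 | apply exp_pos]. Qed.

Lemma continuous_gamma_kernel m t : 0 < t -> continuous (gamma_kernel m) t.
Proof.
  intros Ht. apply continuous_of_ex_derive.
  apply (ex_derive_mult (fun x => Rpower x (m - 1)) (fun x => exp (- x))).
  - eexists. apply is_derive_Rpower_base, Ht.
  - auto_derive. exact I.
Qed.

Lemma ex_RInt_gamma_kernel m a b : 0 < a -> 0 < b -> ex_RInt (gamma_kernel m) a b.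
Proof.
  intros Ha Hb. apply ex_RInt_of_continuous. intros x Hx. apply continuous_gamma_kernel.
  assert (0 < Rmin a b) by (apply Rmin_glb_lt; auto). lra.
Qed.

Definition gamma_prim (m y : R) : R := RInt (gamma_kernel m) 1 y.

Lemma is_derive_gamma_prim m y : 0 < y -> is_derive (gamma_prim m) y (gamma_kernel m y).
Proof.
  intros Hy. apply is_derive_RInt with (a := 1); [|apply continuous_gamma_kernel, Hy].
  exists (mkposreal y Hy). intros z Hz. apply (RInt_correct (V := R_CompleteNormedModule)).
  apply ex_RInt_gamma_kernel; [lra|]. change (Rabs (z - y) < y) in Hz. apply Rabs_def2 in Hz. lra.
Qed.

Lemma gamma_prim_sub m x y :
  0 < x -> 0 < y -> gamma_prim m y - gamma_prim m x = RInt (gamma_kernel m) x y.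
Proof.
  intros Hx Hy. unfold gamma_prim.
  rewrite <- (RInt_Chasles (V := R_CompleteNormedModule) (gamma_kernel m) 1 x y);
    [rewrite plus_R; ring | apply ex_RInt_gamma_kernel; lra..].
Qed.

Lemma gamma_prim_incr m x y : 0 < x <= y -> gamma_prim m x <= gamma_prim m y.
Proof.
  intros Hxy. enough (0 <= gamma_prim m y - gamma_prim m x) by lra.
  rewrite gamma_prim_sub by lra. apply RInt_ge_0; [lra | apply ex_RInt_gamma_kernel; lra |].
  intros; apply Rlt_le, gamma_kernel_pos.
Qed.

Lemma gamma_prim_1 m : gamma_prim m 1 = 0.
Proof. apply (RInt_point (V := R_CompleteNormedModule)). Qed.

Lemma gamma_prim_bounded m : exists B, forall y, 1 <= y -> gamma_prim m y <= B.
Proof.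
  destruct (Rpower_exp_bound (m - 1)) as [K [HK HB]].
  exists (2 * K). intros y Hy. unfold gamma_prim.
  apply Rle_trans with (RInt (fun t => K * exp (- (t / 2))) 1 y).
  - apply RInt_le; [exact Hy | apply ex_RInt_gamma_kernel; lra | |].
    + apply ex_RInt_of_continuous. intros. apply continuous_of_ex_derive. auto_derive. exact I.
    + intros t Ht. apply HB. lra.
  - rewrite (is_RInt_unique _ 1 y (minus (- 2 * K * exp (- (y / 2))) (- 2 * K * exp (- (1 / 2))))).
    + rewrite minus_R. pose proof (exp_pos (- (y / 2))).
      assert (exp (- (1 / 2)) <= 1) by (apply exp_le_1; lra). nra.
    + apply (is_RInt_derive (V := R_CompleteNormedModule) (fun t => - 2 * K * exp (- (t / 2)))).
      * intros. auto_derive; [exact I |]. unfold Rdiv. field.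
      * intros. apply continuous_of_ex_derive. auto_derive. exact I.
Qed.

(* On [(0, 1]]: [t^(m-1) e^-t <= t^(m-1)], whose integral over [(y, 1)] is at most [1 / m]. *)
Lemma gamma_prim_ge m y : 0 < m -> 0 < y <= 1 -> - / m <= gamma_prim m y.
Proof.
  intros Hm Hy.
  replace (gamma_prim m y) with (- RInt (gamma_kernel m) y 1)
    by (rewrite <- gamma_prim_sub, gamma_prim_1 by lra; ring).
  apply Ropp_le_contravar.
  apply Rle_trans with (RInt (fun t => Rpower t (m - 1)) y 1).
  - apply RInt_le; [lra | apply ex_RInt_gamma_kernel; lra | |].
    + apply ex_RInt_of_continuous. intros z Hz. apply continuous_Rpower_base.
      assert (0 < Rmin y 1) by (apply Rmin_glb_lt; lra). lra.
    + intros t Ht. unfold gamma_kernel. pose proof (Rpower_gt_0 t (m - 1)).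
      assert (exp (- t) <= 1) by (apply exp_le_1; lra). nra.
  - rewrite (is_RInt_unique _ y 1 (minus (Rpower 1 m / m) (Rpower y m / m))).
    + rewrite minus_R. unfold Rpower at 1. rewrite ln_1, Rmult_0_r, exp_0.
      pose proof (Rpower_gt_0 y m). pose proof (Rinv_0_lt_compat m Hm). unfold Rdiv. nra.
    + apply (is_RInt_derive (V := R_CompleteNormedModule) (fun t => Rpower t m / m)).
      * intros t Ht. assert (0 < t) by (assert (0 < Rmin y 1) by (apply Rmin_glb_lt; lra); lra).
        replace (Rpower t (m - 1)) with (/ m * (m * Rpower t (m - 1))) by (field; lra).
        apply (is_derive_ext (fun x => / m * Rpower x m)); [intros; apply Rmult_comm|].
        apply is_derive_scal, is_derive_Rpower_base. lra.
      * intros t Ht. apply continuous_Rpower_base.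
        assert (0 < Rmin y 1) by (apply Rmin_glb_lt; lra). lra.
Qed.

Lemma gamma_prim_limits m : 0 < m -> exists L0 L1 : R,
  filterlim (gamma_prim m) (at_right 0) (locally L0) /\ is_lim (gamma_prim m) p_infty L1 /\ L0 < L1.
Proof.
  intros Hm. destruct (gamma_prim_bounded m) as [B HB].
  destruct (is_lim_p_infty_of_incr_bounded (gamma_prim m) 1 B) as [L1 [H1 H1b]];
    [intros; apply gamma_prim_incr; lra | exact HB |].
  destruct (at_right_0_lim_of_incr_bounded (gamma_prim m) (- / m)) as [L0 [H0 H0b]];
    [intros; apply gamma_prim_incr; lra | intros; apply gamma_prim_ge; auto |].
  exists L0, L1. repeat split; auto.
  assert (L0 <= 0) by (rewrite <- (gamma_prim_1 m); apply H0b; lra).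
  assert (0 < gamma_prim m 2).
  { replace (gamma_prim m 2) with (RInt (gamma_kernel m) 1 2)
      by (rewrite <- gamma_prim_sub, gamma_prim_1, Rminus_0_r by lra; reflexivity).
    apply RInt_gt_0; [lra | intros; apply gamma_kernel_pos |].
    intros; apply continuous_gamma_kernel; lra. }
  specialize (H1b 2 ltac:(lra)). lra.
Qed.

(* A primitive of [t^m e^-t]; it expresses [Gamma (m + 1) = m Gamma m], i.e. [E xi^2 = 1]. *)
Definition gamma_succ_prim (m t : R) : R := m * gamma_prim m t - Rpower t m * exp (- t).

Lemma is_derive_gamma_succ_prim m t :
  0 < t -> is_derive (gamma_succ_prim m) t (Rpower t m * exp (- t)).
Proof.
  intros Ht. unfold gamma_succ_prim.
  evar (l : R). replace (Rpower t m * exp (- t)) with l.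
  - apply (is_derive_minus (fun t => m * gamma_prim m t) (fun t => Rpower t m * exp (- t))).
    + apply is_derive_scal, is_derive_gamma_prim, Ht.
    + apply (is_derive_mult (fun x => Rpower x m) (fun x => exp (- x)));
        [apply is_derive_Rpower_base, Ht | auto_derive; [exact I | reflexivity] |].
      intros; apply Rmult_comm.
  - unfold l, gamma_kernel, mult. rewrite minus_R, plus_R. simpl. ring.
Qed.

Lemma gamma_succ_prim_limits (m L0 L1 : R) : 0 < m ->
  filterlim (gamma_prim m) (at_right 0) (locally L0) -> is_lim (gamma_prim m) p_infty L1 ->
  filterlim (gamma_succ_prim m) (at_right 0) (locally (m * L0)) /\
  is_lim (gamma_succ_prim m) p_infty (m * L1).
Proof.
  intros Hm H0 H1. destruct (Rpower_exp_opp_lim m Hm) as [E0 E1]. unfold gamma_succ_prim. split.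
  - replace (m * L0) with (m * L0 - 0) by ring. apply filterlim_Rminus; [| exact E0].
    exact (filterlim_comp _ _ _ (gamma_prim m) (Rmult m) _ _ _ H0 (filterlim_scal_r m L0)).
  - replace (m * L1) with (m * L1 - 0) by ring.
    apply (is_lim_minus' (fun t => m * gamma_prim m t)); [|exact E1].
    apply (is_lim_scal_l _ m p_infty L1), H1.
Qed.

(** * Nakagami moments *)

Lemma ln_scal_sqr k x : 0 < k -> 0 < x -> ln (k * x ^ 2) = ln k + 2 * ln x.
Proof. intros Hk Hx. rewrite ln_mult, ln_pow by (try apply pow_lt; assumption). simpl. ring. Qed.

Lemma nakagami_pdf_exp_sqr_eq m Gm c x : 0 < m -> 0 < Gm -> c <= 0 -> 0 < x ->
  Rpower m m / (Gm * Rpower (m - c) m) * ((m - c) * (2 * x) * gamma_kernel m ((m - c) * x ^ 2))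
  = nakagami_pdf m Gm x * exp (c * x ^ 2).
Proof.
  intros Hm HG Hc Hx. set (k := m - c). assert (Hk : 0 < k) by (unfold k; lra).
  unfold gamma_kernel, nakagami_pdf, Rpower. rewrite ln_scal_sqr by assumption.
  set (lk := ln k). set (lx := ln x).
  replace (k * (2 * x)) with (2 * exp (lk + lx))
    by (rewrite exp_plus; unfold lk, lx; rewrite !exp_ln by assumption; ring).
  replace (exp (- (k * x ^ 2))) with (exp (- m * x ^ 2) * exp (c * x ^ 2))
    by (rewrite <- exp_plus; f_equal; unfold k; ring).
  transitivity (exp (m * ln m) / (Gm * exp (m * lk)) * 2
    * (exp (lk + lx) * exp ((m - 1) * (lk + 2 * lx))) * exp (- m * x ^ 2) * exp (c * x ^ 2));
    [ring|].
  replace (exp (lk + lx) * exp ((m - 1) * (lk + 2 * lx)))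
    with (exp (m * lk) * exp ((2 * m - 1) * lx)) by (rewrite <- !exp_plus; f_equal; ring).
  field. split; [lra | apply Rgt_not_eq, exp_pos].
Qed.

Lemma nakagami_pdf_sqr_eq m Gm x : 0 < m -> 0 < Gm -> 0 < x ->
  / (m * Gm) * (m * (2 * x) * (Rpower (m * x ^ 2) m * exp (- (m * x ^ 2))))
  = nakagami_pdf m Gm x * x ^ 2.
Proof.
  intros Hm HG Hx. unfold nakagami_pdf, Rpower. rewrite ln_scal_sqr by assumption.
  set (lx := ln x).
  replace (m * (ln m + 2 * lx)) with (m * ln m + 2 * m * lx) by ring. rewrite exp_plus.
  replace (exp (2 * m * lx)) with (exp ((2 * m - 1) * lx) * x)
    by (replace x with (exp lx) at 1 by (apply exp_ln, Hx); rewrite <- exp_plus; f_equal; ring).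
  replace (- (m * x ^ 2)) with (- m * x ^ 2) by ring. field. lra.
Qed.

Lemma continuous_nakagami_pdf_mult m Gm (g : R -> R) x : 0 < x -> ex_derive g x ->
  continuous (fun x => nakagami_pdf m Gm x * g x) x.
Proof.
  intros Hx Hg. apply continuous_of_ex_derive. unfold nakagami_pdf.
  apply (ex_derive_mult (fun x => 2 * Rpower m m / Gm * Rpower x (2 * m - 1) * exp (- m * x ^ 2)));
    [|exact Hg].
  apply (ex_derive_mult (fun x => 2 * Rpower m m / Gm * Rpower x (2 * m - 1)));
    [|auto_derive; exact I].
  apply (ex_derive_scal (fun x => Rpower x (2 * m - 1))). eexists. apply is_derive_Rpower_base, Hx.
Qed.

Section Nakagami.

(* [L1 - L0] is the Gamma integral at [m]. *)
Variables m L0 L1 : R.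
Hypothesis Hm : 0 < m.
Hypothesis HL0 : filterlim (gamma_prim m) (at_right 0) (locally L0).
Hypothesis HL1 : is_lim (gamma_prim m) p_infty L1.
Hypothesis HL : L0 < L1.

Lemma halfline_int_gamma_kernel : halfline_int (gamma_kernel m) (L1 - L0).
Proof.
  apply (halfline_int_derive _ (gamma_prim m) L0 L1); auto.
  - intros; apply is_derive_gamma_prim; assumption.
  - intros; apply continuous_gamma_kernel; assumption.
Qed.

(* Substituting [t = (m - c) x^2] turns the integral into a Gamma integral. *)
Lemma halfline_int_nakagami_exp_sqr c : c <= 0 ->
  halfline_int (fun x => nakagami_pdf m (L1 - L0) x * exp (c * x ^ 2)) (Rpower (1 - / m * c) (- m)).
Proof.
  intros Hc. set (k := m - c). assert (Hk : 0 < k) by (unfold k; lra).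
  set (K := Rpower m m / ((L1 - L0) * Rpower k m)).
  destruct (limits_scal_comp_scal_sqr (gamma_prim m) L0 L1 k K Hk HL0 HL1) as [H0 H1].
  apply (halfline_int_derive _ (fun x => K * gamma_prim m (k * x ^ 2)) (K * L0) (K * L1));
    [| | exact H0 | exact H1 |].
  - intros x Hx. rewrite <- nakagami_pdf_exp_sqr_eq by lra. fold k K.
    apply (is_derive_scal (fun x => gamma_prim m (k * x ^ 2))).
    evar (l : R). replace (k * (2 * x) * gamma_kernel m (k * x ^ 2)) with l.
    + apply (is_derive_comp (gamma_prim m) (fun x => k * x ^ 2));
        [apply is_derive_gamma_prim; apply Rmult_lt_0_compat; [lra | apply pow_lt, Hx] |].
      auto_derive; [exact I | reflexivity].
    + unfold l. rewrite scal_R. simpl. ring.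
  - intros x Hx. apply continuous_nakagami_pdf_mult; [exact Hx | auto_derive; exact I].
  - unfold K, Rpower. replace (1 - / m * c) with (k / m) by (unfold k; field; lra).
    rewrite ln_div by lra. replace (- m * (ln k - ln m)) with (m * ln m + - (m * ln k)) by ring.
    rewrite exp_plus, exp_Ropp. field. split; [apply Rgt_not_eq, exp_pos | lra].
Qed.

Lemma halfline_int_nakagami : halfline_int (nakagami_pdf m (L1 - L0)) 1.
Proof.
  apply (is_RInt_gen_ext (fun x => nakagami_pdf m (L1 - L0) x * exp (0 * x ^ 2))).
  - apply filter_forall. intros ab x _. rewrite Rmult_0_l, exp_0. apply Rmult_1_r.
  - replace 1 with (Rpower (1 - / m * 0) (- m))
      by (rewrite Rmult_0_r, Rminus_0_r; unfold Rpower; rewrite ln_1, Rmult_0_r; apply exp_0).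
    apply halfline_int_nakagami_exp_sqr. lra.
Qed.

Lemma halfline_int_nakagami_sqr : halfline_int (fun x => nakagami_pdf m (L1 - L0) x * x ^ 2) 1.
Proof.
  set (K := / (m * (L1 - L0))).
  destruct (gamma_succ_prim_limits m L0 L1 Hm HL0 HL1) as [G0 G1].
  destruct (limits_scal_comp_scal_sqr (gamma_succ_prim m) (m * L0) (m * L1) m K Hm G0 G1)
    as [H0 H1].
  apply (halfline_int_derive _ (fun x => K * gamma_succ_prim m (m * x ^ 2))
    (K * (m * L0)) (K * (m * L1)));
    [| | exact H0 | exact H1 |].
  - intros x Hx. rewrite <- nakagami_pdf_sqr_eq by lra. fold K.
    apply (is_derive_scal (fun x => gamma_succ_prim m (m * x ^ 2))).
    evar (l : R). replace (m * (2 * x) * (Rpower (m * x ^ 2) m * exp (- (m * x ^ 2)))) with l.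
    + apply (is_derive_comp (gamma_succ_prim m) (fun x => m * x ^ 2));
        [apply is_derive_gamma_succ_prim; apply Rmult_lt_0_compat; [lra | apply pow_lt, Hx] |].
      auto_derive; [exact I | reflexivity].
    + unfold l. rewrite scal_R. simpl. ring.
  - intros x Hx. apply continuous_nakagami_pdf_mult; [exact Hx | auto_derive; exact I].
  - unfold K. field. lra.
Qed.

End Nakagami.

(** * Iterated integrals of separable integrands *)

Lemma sumR_Sl n f : sumR (S n) f = f O + sumR n (fun j => f (S j)).
Proof.
  revert f. induction n as [|n IH]; intros f; [simpl; ring|].
  change (sumR (S (S n)) f) with (sumR (S n) f + f (S n)). rewrite IH. simpl. ring.
Qed.

Lemma sumR_ext n f g : (forall i, (i < n)%nat -> f i = g i) -> sumR n f = sumR n g.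
Proof.
  induction n as [|n IH]; intros H; simpl; [reflexivity|].
  rewrite H by lia. rewrite IH; [reflexivity | intros i Hi; apply H; lia].
Qed.

Lemma sumR_plus n f g : sumR n (fun i => f i + g i) = sumR n f + sumR n g.
Proof. induction n as [|n IH]; simpl; [ring | rewrite IH; ring]. Qed.

Lemma sumR_scal n c f : sumR n (fun i => c * f i) = c * sumR n f.
Proof. induction n as [|n IH]; simpl; [ring | rewrite IH; ring]. Qed.

Lemma sumR_const n c : sumR n (fun _ => c) = INR n * c.
Proof. induction n as [|n IH]; [simpl; ring | rewrite S_INR; simpl; rewrite IH; ring]. Qed.

Lemma sumR_add n k f : sumR (n + k) f = sumR n f + sumR k (fun i => f (n + i)%nat).
Proof.
  induction k as [|k IH]; [rewrite Nat.add_0_r; simpl; ring|].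
  rewrite Nat.add_succ_r. simpl. rewrite IH. ring.
Qed.

Lemma sumR_ge_0 n f : (forall i, 0 <= f i) -> 0 <= sumR n f.
Proof. intros H. induction n as [|n IH]; simpl; [lra | pose proof (H n); lra]. Qed.

Lemma IterInt_ext n w F G l : (forall v, F v = G v) -> IterInt n w F l -> IterInt n w G l.
Proof. intros E H. replace G with F by (apply functional_extensionality, E). exact H. Qed.

Lemma IterInt_exp_sum n : forall (w h : nat -> R -> R) (e : nat -> R) K,
  (forall j, (j < n)%nat -> line_int (fun x => w j x * exp (h j x)) (exp (e j))) ->
  IterInt n w (fun v => K * exp (sumR n (fun j => h j (v j)))) (K * exp (sumR n e)).
Proof.
  induction n as [|n IH]; intros w h e K Hj; [reflexivity|].
  exists (fun x => K * exp (h O x) * exp (sumR n (fun j => e (S j)))). split.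
  - intros x.
    apply IterInt_ext with (fun v => K * exp (h O x) * exp (sumR n (fun j => h (S j) (v j)))).
    { intros v. rewrite sumR_Sl, exp_plus. simpl. ring. }
    apply (IH (fun i => w (S i)) (fun j => h (S j)) (fun j => e (S j))).
    intros j Hjn. apply Hj. lia.
  - apply ImpInt_R_of_line_int. pose proof (Hj O ltac:(lia)) as H0.
    refine (line_int_ext _ _ _ _ _ _
      (is_RInt_gen_scal _ (K * exp (sumR n (fun j => e (S j)))) _ H0)).
    + intros x. rewrite scal_R. ring.
    + rewrite scal_R, sumR_Sl, exp_plus. ring.
Qed.

Lemma IterInt_sum n : forall (w h : nat -> R -> R) (d : nat -> R) K,
  (forall j, (j < n)%nat -> line_int (w j) 1 /\ line_int (fun x => w j x * h j x) (d j)) ->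
  IterInt n w (fun v => K + sumR n (fun j => h j (v j))) (K + sumR n d).
Proof.
  induction n as [|n IH]; intros w h d K Hj; [reflexivity|].
  exists (fun x => K + h O x + sumR n (fun j => d (S j))). split.
  - intros x.
    apply IterInt_ext with (fun v => K + h O x + sumR n (fun j => h (S j) (v j))).
    { intros v. rewrite sumR_Sl. simpl. ring. }
    apply (IH (fun i => w (S i)) (fun j => h (S j)) (fun j => d (S j))).
    intros j Hjn. apply Hj. lia.
  - apply ImpInt_R_of_line_int. destruct (Hj O ltac:(lia)) as [H1 H2].
    refine (line_int_ext _ _ _ _ _ _ (is_RInt_gen_plus _ _ _ _
      (is_RInt_gen_scal _ (K + sumR n (fun j => d (S j))) _ H1) H2)).
    + intros x. rewrite plus_R, scal_R. ring.
    + rewrite plus_R, scal_R, sumR_Sl. ring.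
Qed.

(** * The Fluctuating Beckmann model *)

Lemma FB_p2_ge_0 (n : nat) (a : nat -> R) : 0 <= FB_p2 n a.
Proof. apply sumR_ge_0. intros; apply pow2_ge_0. Qed.

(* Coordinate [j] of the Gaussian vector has standard deviation [FB_sigma j] and enters [FB_W]
   shifted by [FB_shift j * xi]. *)
Definition FB_sigma (mu : nat) (sx sy : R) (j : nat) : R := if Nat.ltb j mu then sx else sy.

Definition FB_shift (mu : nat) (p q : nat -> R) (j : nat) : R :=
  if Nat.ltb j mu then p j else q (j - mu)%nat.

Lemma FB_weights_eq mu sx sy j : FB_weights mu sx sy j = gauss_pdf (FB_sigma mu sx sy j).
Proof. unfold FB_weights, FB_sigma. destruct (Nat.ltb j mu); reflexivity. Qed.

Lemma FB_sigma_pos mu sx sy j : 0 < sx -> 0 < sy -> 0 < FB_sigma mu sx sy j.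
Proof. unfold FB_sigma. destruct (Nat.ltb j mu); auto. Qed.

Lemma sumR_FB_quadratic mu sx sy p q (c d : R -> R) x :
  sumR (2 * mu)
    (fun j => c (FB_sigma mu sx sy j) + d (FB_sigma mu sx sy j) * (FB_shift mu p q j * x) ^ 2)
  = INR mu * (c sx + c sy) + (d sx * FB_p2 mu p + d sy * FB_p2 mu q) * x ^ 2.
Proof.
  replace (2 * mu)%nat with (mu + mu)%nat by lia. rewrite sumR_add.
  transitivity (sumR mu (fun i => c sx + (d sx * x ^ 2) * p i ^ 2)
    + sumR mu (fun i => c sy + (d sy * x ^ 2) * q i ^ 2)).
  - f_equal; apply sumR_ext; intros i Hi; unfold FB_sigma, FB_shift.
    + rewrite (proj2 (Nat.ltb_lt i mu) Hi). ring.
    + rewrite (proj2 (Nat.ltb_nlt (mu + i) mu)) by lia.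
      replace (mu + i - mu)%nat with i by lia. ring.
  - unfold FB_p2. rewrite !sumR_plus, !sumR_const, !sumR_scal. ring.
Qed.

Lemma FB_W_eq mu p q xi v :
  FB_W mu p q xi v = sumR (2 * mu) (fun j => (v j + FB_shift mu p q j * xi) ^ 2).
Proof.
  replace (2 * mu)%nat with (mu + mu)%nat by lia. rewrite sumR_add. unfold FB_W. rewrite sumR_plus.
  f_equal; apply sumR_ext.
  - intros i Hi. unfold FB_shift. now rewrite (proj2 (Nat.ltb_lt i mu) Hi).
  - intros i Hi. unfold FB_shift. rewrite (proj2 (Nat.ltb_nlt (mu + i) mu)) by lia.
    now replace (mu + i - mu)%nat with i by lia.
Qed.

Section FB_moments.

Variables (mu : nat) (sx sy m L0 L1 : R) (p q : nat -> R).
Hypothesis Hsx : 0 < sx.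
Hypothesis Hsy : 0 < sy.
Hypothesis Hm : 0 < m.
Hypothesis HL0 : filterlim (gamma_prim m) (at_right 0) (locally L0).
Hypothesis HL1 : is_lim (gamma_prim m) p_infty L1.
Hypothesis HL : L0 < L1.

Lemma FB_Expect_W :
  FB_Expect mu sx sy m (L1 - L0) (FB_W mu p q)
    (INR mu * (sx ^ 2 + sy ^ 2) + (FB_p2 mu p + FB_p2 mu q)).
Proof.
  exists (fun x =>
    0 + sumR (2 * mu) (fun j => FB_sigma mu sx sy j ^ 2 + (FB_shift mu p q j * x) ^ 2)).
  split.
  - intros x Hx. apply IterInt_ext with
      (fun v => 0 + sumR (2 * mu) (fun j => (fun j y => (y + FB_shift mu p q j * x) ^ 2) j (v j))).
    { intros v. rewrite FB_W_eq. ring. }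
    apply (IterInt_sum (2 * mu) _ (fun j y => (y + FB_shift mu p q j * x) ^ 2)
      (fun j => FB_sigma mu sx sy j ^ 2 + (FB_shift mu p q j * x) ^ 2)).
    intros j _. rewrite FB_weights_eq.
    split; [apply line_int_gauss_pdf | apply line_int_gauss_pdf_sqr_shift];
      apply FB_sigma_pos; assumption.
  - apply ImpInt_pos_of_halfline_int.
    refine (halfline_int_ext _ _ _ _ _ _ (is_RInt_gen_plus _ _ _ _
      (is_RInt_gen_scal _ (INR mu * (sx ^ 2 + sy ^ 2)) _
        (halfline_int_nakagami m L0 L1 Hm HL0 HL1 HL))
      (is_RInt_gen_scal _ (FB_p2 mu p + FB_p2 mu q) _
        (halfline_int_nakagami_sqr m L0 L1 Hm HL0 HL1 HL)))).
    + intros x _. rewrite plus_R, !scal_R.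
      rewrite (sumR_ext _ _ (fun j => (fun s => s ^ 2) (FB_sigma mu sx sy j)
        + (fun _ => 1) (FB_sigma mu sx sy j) * (FB_shift mu p q j * x) ^ 2)) by (intros; ring).
      rewrite (sumR_FB_quadratic mu sx sy p q (fun s => s ^ 2) (fun _ => 1) x).
      unfold scal; simpl; unfold mult; simpl. ring.
    + unfold plus, scal; simpl; unfold mult; simpl. ring.
Qed.

Lemma FB_Expect_exp_W t : t <= 0 ->
  FB_Expect mu sx sy m (L1 - L0) (fun xi v => exp (t * FB_W mu p q xi v))
    (exp (INR mu * (- / 2 * ln (1 - 2 * t * sx ^ 2) + - / 2 * ln (1 - 2 * t * sy ^ 2))) *
     Rpower (1 - / m * (t / (1 - 2 * t * sx ^ 2) * FB_p2 mu p
                        + t / (1 - 2 * t * sy ^ 2) * FB_p2 mu q)) (- m)).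
Proof.
  intros Ht.
  set (c := t / (1 - 2 * t * sx ^ 2) * FB_p2 mu p + t / (1 - 2 * t * sy ^ 2) * FB_p2 mu q).
  assert (Hc : c <= 0).
  { assert (Hd : forall s0, 0 < s0 -> t / (1 - 2 * t * s0 ^ 2) <= 0).
    { intros s0 Hs0. unfold Rdiv.
      assert (0 < / (1 - 2 * t * s0 ^ 2)) by (apply Rinv_0_lt_compat; nra).
      nra. }
    pose proof (Hd sx Hsx). pose proof (Hd sy Hsy).
    pose proof (FB_p2_ge_0 mu p). pose proof (FB_p2_ge_0 mu q). unfold c. nra. }
  exists (fun x => 1 * exp (sumR (2 * mu)
    (fun j => sqr_gauss_log_mgf (FB_sigma mu sx sy j) t (FB_shift mu p q j * x)))).
  split.
  - intros x Hx. apply IterInt_ext with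
      (fun v => 1 * exp (sumR (2 * mu)
        (fun j => (fun j y => t * (y + FB_shift mu p q j * x) ^ 2) j (v j)))).
    { intros v. rewrite FB_W_eq, <- sumR_scal. ring. }
    apply (IterInt_exp_sum (2 * mu) _ (fun j y => t * (y + FB_shift mu p q j * x) ^ 2)
      (fun j => sqr_gauss_log_mgf (FB_sigma mu sx sy j) t (FB_shift mu p q j * x))).
    intros j _. rewrite FB_weights_eq.
    apply line_int_gauss_pdf_exp_sqr_shift; [apply FB_sigma_pos; assumption | exact Ht].
  - apply ImpInt_pos_of_halfline_int.
    set (E := INR mu * (- / 2 * ln (1 - 2 * t * sx ^ 2) + - / 2 * ln (1 - 2 * t * sy ^ 2))).
    refine (halfline_int_ext _ _ _ _ _ _ (is_RInt_gen_scal _ (exp E) _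
      (halfline_int_nakagami_exp_sqr m L0 L1 Hm HL0 HL1 HL c Hc))).
    + intros x _. 
      rewrite (sumR_ext _ _ (fun j => (fun s => - / 2 * ln (1 - 2 * t * s ^ 2)) (FB_sigma mu sx sy j)
        + (fun s => t / (1 - 2 * t * s ^ 2)) (FB_sigma mu sx sy j) * (FB_shift mu p q j * x) ^ 2))
        by (intros; unfold sqr_gauss_log_mgf, Rdiv; ring).
      rewrite (sumR_FB_quadratic mu sx sy p q (fun s => - / 2 * ln (1 - 2 * t * s ^ 2))
        (fun s => t / (1 - 2 * t * s ^ 2)) x).
      rewrite scal_R. fold c E. rewrite exp_plus. ring.
    + reflexivity.
Qed.

End FB_moments.

Lemma FB_MGF_eq (mu : nat) sx sy m gbar (p q : nat -> R) s t :
  (0 < mu)%nat -> 0 < sx -> 0 < sy -> 0 < gbar -> 0 < FB_p2 mu q -> s <= 0 ->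
  t = s * gbar / (INR mu * (sx ^ 2 + sy ^ 2) + (FB_p2 mu p + FB_p2 mu q)) ->
  exp (INR mu * (- / 2 * ln (1 - 2 * t * sx ^ 2) + - / 2 * ln (1 - 2 * t * sy ^ 2))) *
  Rpower (1 - / m * (t / (1 - 2 * t * sx ^ 2) * FB_p2 mu p + t / (1 - 2 * t * sy ^ 2) * FB_p2 mu q))
    (- m)
  = FB_MGF gbar (FB_kappa mu sx sy p q) mu m (FB_eta sx sy) (FB_rho mu p q) s.
Proof.
  intros Hmu Hsx Hsy Hg HQ Hs ->.
  unfold FB_MGF, FB_kappa, FB_eta, FB_rho. cbv zeta.
  set (P := FB_p2 mu p) in *. set (Q := FB_p2 mu q) in *.
  assert (HP : 0 <= P) by apply FB_p2_ge_0.
  assert (Hmu' : 0 < INR mu) by (apply lt_0_INR; exact Hmu).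
  set (EW := INR mu * (sx ^ 2 + sy ^ 2) + (P + Q)).
  assert (Hs2 : 0 < sx ^ 2 + sy ^ 2) by nra.
  assert (HEW : 0 < EW) by (unfold EW; pose proof (Rmult_lt_0_compat _ _ Hmu' Hs2); lra).
  set (t := s * gbar / EW).
  assert (Ht : t <= 0).
  { unfold t, Rdiv. pose proof (Rinv_0_lt_compat EW HEW). assert (s * gbar <= 0) by nra. nra. }
  set (Dx := 1 - 2 * t * sx ^ 2). set (Dy := 1 - 2 * t * sy ^ 2).
  assert (HDx : 0 < Dx) by (unfold Dx; nra). assert (HDy : 0 < Dy) by (unfold Dy; nra).
  rewrite pow2_sqrt by (apply Rdiv_le_0_compat; lra).
  replace (1 - 2 * (sx ^ 2 / sy ^ 2) * gbar * s /
    (INR mu * (1 + sx ^ 2 / sy ^ 2) * (1 + (P + Q) / (INR mu * (sx ^ 2 + sy ^ 2))))) with Dx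
    by (unfold Dx, t, EW; field; repeat split; try lra; fold EW; lra).
  replace (1 - 2 * gbar * s /
    (INR mu * (1 + sx ^ 2 / sy ^ 2) * (1 + (P + Q) / (INR mu * (sx ^ 2 + sy ^ 2))))) with Dy
    by (unfold Dy, t, EW; field; repeat split; try lra; fold EW; lra).
  replace ((1 + sx ^ 2 / sy ^ 2) * (1 + (P + Q) / (INR mu * (sx ^ 2 + sy ^ 2))) * INR mu)
    with (EW / sy ^ 2) by (unfold EW; field; repeat split; lra).
  replace (EW / sy ^ 2 - 2 * (sx ^ 2 / sy ^ 2) * gbar * s) with (EW * Dx / sy ^ 2)
    by (unfold Dx, t; field; split; lra).
  replace (EW / sy ^ 2 - 2 * gbar * s) with (EW * Dy / sy ^ 2) by (unfold Dy, t; field; split; lra).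
  match goal with
  | |- _ = _ * Rpower ?Y _ => replace Y with (1 - / m * (t / Dx * P + t / Dy * Q))
  end.
  2:{ f_equal. f_equal. unfold t. field. repeat split; lra. }
  f_equal. unfold Rpower. rewrite <- exp_plus, <- exp_Ropp. f_equal. field.
Qed.

Theorem lemma1 (mu : nat) (sx sy m gbar : R) (p q : nat -> R) (s : R)
  (Hmu : (0 < mu)%nat) (Hsx : 0 < sx) (Hsy : 0 < sy) (Hm : 0 < m)
  (Hg : 0 < gbar) (Hq : 0 < FB_p2 mu q) (Hs : s <= 0) :
  exists Gm, is_Gamma m Gm /\
  exists EW, FB_Expect mu sx sy m Gm (FB_W mu p q) EW /\
    FB_Expect mu sx sy m Gm
      (fun xi v => exp (s * (gbar * FB_W mu p q xi v / EW)))
      (FB_MGF gbar (FB_kappa mu sx sy p q) mu m (FB_eta sx sy)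
              (FB_rho mu p q) s).
Proof.
  destruct (gamma_prim_limits m Hm) as (L0 & L1 & HL0 & HL1 & HL).
  exists (L1 - L0). split.
  { apply ImpInt_pos_of_halfline_int, halfline_int_gamma_kernel; assumption. }
  set (EW := INR mu * (sx ^ 2 + sy ^ 2) + (FB_p2 mu p + FB_p2 mu q)).
  assert (HEW : 0 < EW).
  { pose proof (lt_0_INR mu Hmu). pose proof (FB_p2_ge_0 mu p).
    assert (0 < INR mu * (sx ^ 2 + sy ^ 2)) by (apply Rmult_lt_0_compat; nra). unfold EW. lra. }
  exists EW. split; [apply FB_Expect_W; assumption |].
  replace (fun xi v => exp (s * (gbar * FB_W mu p q xi v / EW)))
    with (fun xi v => exp (s * gbar / EW * FB_W mu p q xi v))
    by (do 2 (apply functional_extensionality; intros); f_equal; field; lra).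
  rewrite <- (FB_MGF_eq mu sx sy m gbar p q s (s * gbar / EW)) by (auto; reflexivity).
  apply FB_Expect_exp_W; try assumption.
  unfold Rdiv. pose proof (Rinv_0_lt_compat EW HEW). assert (s * gbar <= 0) by nra. nra.
Qed.
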